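(* Let $G$ be a directed graph and let $V_C$ be a zero forcing set of $G$. Then the following are equivalent: (i) for every $(u,v)\in (V(G)\times V(G))\setminus E(G)$, the LTI network on $G+\{(u,v)\}$ with control nodes $V_C$ is not strongly structurally controllable; (ii) there exist a set $\mathcal{C}$ of node-disjoint chains covering $V(G)$ with set of sources $V_C$ and a time function $T$ for $\mathcal{C}$ such that $G=\mathcal{G}^{\mathcal{C},T}_{\mathrm{perf}}$.
   Context: Graphs are directed, self-loops allowed; $V(G)=\{1,\ldots,n\}$; $G+E'$ has edge set $E(G)\cup E'$. $\mathcal{Q}(G)=\{A\in\mathbb{R}^{n\times n}:\text{for } i\neq j,\ A_{ij}\neq0\iff(j,i)\in E(G)\}$. For $V_C=\{j_1,\ldots,j_m\}$, $B=[e_{j_1},\ldots,e_{j_m}]$; the LTI network on $G$ with control nodes $V_C$ is strongly structurally controllable if $(A,B)$ is controllable for all $A\in\mathcal{Q}(G)$. Zero forcing: with nodes colored black/white, a black node with exactly one white out-neighbor turns it black; a set $S$ is a zero forcing set if starting from black set $S$ and applying this rule repeatedly makes all nodes black. A chain is a directed path graph with source (start node) and sink (end node); for a non-sink $v$, $v+1$ is its out-neighbor. For node-disjoint chains $\mathcal{C}=\{C_1,\ldots,C_m\}$, $V=\bigcup_iV(C_i)$, $\gamma=|V|-m+1$, a time function is $T:V\to\{1,\ldots,\gamma\}$ with (1) $T(v)=1$ for every source; (2) distinct non-source nodes get distinct values; (3) $T(v)<T(v+1)$ for non-sink $v$. $T_{\max}(v)=\gamma$ for a sink $v$, else $T_{\max}(v)=T(v+1)-1$.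 The perfect $(\mathcal{C},T)$-constructed graph $\mathcal{G}^{\mathcal{C},T}_{\mathrm{perf}}$ has node set $V$ and edge set $\bigcup_iE(C_i)\cup\{(u,v)\in V\times V: T_{\max}(u)\geq T(v)\}$. *)

From Stdlib Require Import Rdefinitions.
From HB Require Import structures.
From mathcomp Require Import all_boot all_order all_algebra.
From mathcomp Require Import Rstruct.

Set Implicit Arguments.
Unset Strict Implicit.
Unset Printing Implicit Defensive.

Import GRing.Theory.

(* A directed graph on V(G) = 'I_n (nodes 0..n-1 stand for 1..n), self-loops
   allowed, is given by its edge set E : {set 'I_n * 'I_n}; (u,v) is an edge
   from u to v. G + E' has edge set E :|: E'. *)

Definition inQ (n : nat) (E : {set 'I_n * 'I_n}) (A : 'M[R]_n) : Prop :=
  forall i j : 'I_n, i != j -> ((A i j != 0)%R <-> (j, i) \in E).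

Definition Bmat (n : nat) (VC : {set 'I_n}) : 'M[R]_(n, #|VC|) :=
  \matrix_(i < n, k < #|VC|) (if i == enum_val k then 1%R else 0%R).

Definition kalman (n m : nat) (A : 'M[R]_n) (B : 'M[R]_(n, m)) :=
  @mxrow R n (fun _ => m) n (fun k : 'I_n => ((A ^+ k) *m B)%R).

Definition controllable (n m : nat) (A : 'M[R]_n) (B : 'M[R]_(n, m)) : Prop :=
  \rank (kalman A B) = n.

Definition SSC (n : nat) (E : {set 'I_n * 'I_n}) (VC : {set 'I_n}) : Prop :=
  forall A : 'M[R]_n, inQ E A -> controllable A (Bmat VC).

Definition out_nbrs (n : nat) (E : {set 'I_n * 'I_n}) (x : 'I_n) : {set 'I_n} :=
  [set y | (x, y) \in E].

Definition forces (n : nat) (E : {set 'I_n * 'I_n}) (Blk : {set 'I_n})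
  (x y : 'I_n) : bool :=
  (x \in Blk) && (out_nbrs E x :\: Blk == [set y]).

Fixpoint valid_forcing (n : nat) (E : {set 'I_n * 'I_n}) (Blk : {set 'I_n})
  (s : seq 'I_n) : bool :=
  match s with
  | [::] => true
  | y :: s' => [exists x, forces E Blk x y] && valid_forcing E (y |: Blk) s'
  end.

Definition zero_forcing_set (n : nat) (E : {set 'I_n * 'I_n}) (S : {set 'I_n})
  : Prop :=
  exists s : seq 'I_n, valid_forcing E S s /\ S :|: [set x in s] = [set: 'I_n].

(** A chain is represented by the nonempty duplicate-free sequence of
    its nodes, from source (head) to sink (last); its edges are the pairs of
    consecutive nodes. *)
Definition chain_edges_of (n : nat) (c : seq 'I_n) : seq ('I_n * 'I_n) :=
  zip c (behead c).

Definition chain_edges (n : nat) (C : seq (seq 'I_n)) : {set 'I_n * 'I_n} :=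
  [set p | has (fun c => p \in chain_edges_of c) C].

Definition chain_cover (n : nat) (C : seq (seq 'I_n)) : Prop :=
  all (fun c => c != [::]) C /\ uniq (flatten C) /\
  (forall v : 'I_n, v \in flatten C).

Definition sources (n : nat) (C : seq (seq 'I_n)) : {set 'I_n} :=
  [set v | has (fun c => (c != [::]) && (v == head v c)) C].

Definition is_sink (n : nat) (C : seq (seq 'I_n)) (v : 'I_n) : bool :=
  [forall w, (v, w) \notin chain_edges C].

Definition gamma (n : nat) (C : seq (seq 'I_n)) : nat :=
  addn (subn (size (flatten C)) (size C)) 1.

Definition time_function (n : nat) (C : seq (seq 'I_n)) (T : 'I_n -> nat)
  : Prop :=
  (forall v, 1 <= T v <= gamma C)%N /\
  (forall v, v \in sources C -> T v = 1%N) /\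
  (forall u v, u \notin sources C -> v \notin sources C -> u != v ->
     T u != T v) /\
  (forall u v, (u, v) \in chain_edges C -> (T u < T v)%N).

Definition Tmax (n : nat) (C : seq (seq 'I_n)) (T : 'I_n -> nat) (v : 'I_n)
  : nat :=
  match [pick w | (v, w) \in chain_edges C] with
  | Some w => (T w).-1
  | None => gamma C
  end.

Definition perfect_edges (n : nat) (C : seq (seq 'I_n)) (T : 'I_n -> nat)
  : {set 'I_n * 'I_n} :=
  chain_edges C :|: [set p | (T p.2 <= Tmax C T p.1)%N].

(* Over the reals, the network is strongly structurally controllable from V_C
   exactly when V_C is a zero forcing set: every force recovers one more zero
   coordinate of a left null vector of the Kalman matrix, and if forcing stalls
   at a set D <> V there is an A in Q(G) for which the indicator of the
   complement of D is a left null vector of both A and B.  So (i) says that G is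
   a maximal graph in which V_C is zero forcing.
   The forcing chains of a chronological list of forces, together with the time
   at which each node turns black, give chains C and a time function T with
   E(C) <= E(G) <= E(G_perf^{C,T}); conversely the sources of C force every
   graph between these two edge sets, one time step at a time.  Hence a maximal
   G is perfect.  Conversely, a perfect graph misses exactly k(k-1)/2 edges,
   k = |V \ V_C|, since its non-edges (u,w) correspond to the pairs (u+1,w) of
   non-sources with T(u+1) < T(w); so it is not properly contained in another
   graph in which V_C is zero forcing. *)

From Stdlib Require Import Rdefinitions.
From HB Require Import structures.
From mathcomp Require Import all_boot all_order all_algebra.
From mathcomp Require Import Rstruct zify.

Set Implicit Arguments.
Unset Strict Implicit.
Unset Printing Implicit Defensive.

Import GRing.Theory Num.Theory.

Section ConsecutivePairs.
Variable T : eqType.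
Implicit Types (s : seq T) (x y z : T).

Lemma mem_zip_behead s x y :
  (x, y) \in zip s (behead s) -> x \in s /\ y \in behead s.
Proof.
elim: s => [|a [|b s] IH] //=; rewrite in_cons => /orP[/eqP[-> ->]|/IH[]].
  by rewrite !inE !eqxx ?orbT.
by move=> xs /mem_behead ys; rewrite xs orbT.
Qed.

Lemma zip_behead_fun s x y z : uniq s ->
  (x, y) \in zip s (behead s) -> (x, z) \in zip s (behead s) -> y = z.
Proof.
elim: s => [|a [|b s] IH] //= /andP[aNs Us]; rewrite !in_cons.
case/orP=> [/eqP[ex ey]|xy] /orP[/eqP[ex' ez]|xz]; subst => //.
- by have [] := mem_zip_behead xz; rewrite (negbTE aNs).
- by have [] := mem_zip_behead xy; rewrite (negbTE aNs).
- exact: IH.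
Qed.

Lemma zip_behead_inj s x y z : uniq s ->
  (x, z) \in zip s (behead s) -> (y, z) \in zip s (behead s) -> x = y.
Proof.
elim: s => [|a [|b s] IH] //= /andP[aNs Us]; move: (Us) => /andP[bNs _].
rewrite !in_cons.
case/orP=> [/eqP[ex ez]|xz] /orP[/eqP[ey ez']|yz]; subst => //.
- by have [_] := mem_zip_behead yz; rewrite /= (negbTE bNs).
- by have [_] := mem_zip_behead xz; rewrite /= (negbTE bNs).
- exact: IH.
Qed.

Lemma zip_behead_pred s y :
  y \in behead s -> exists x, (x, y) \in zip s (behead s).
Proof.
elim: s => [|a [|b s] IH] //=; rewrite in_cons => /orP[/eqP ->|/IH[x xy]].
  by exists a; rewrite mem_head.
by exists x; rewrite in_cons xy orbT.
Qed.

Lemma zip_behead_last a s x : x \in a :: s ->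
  (forall y, (x, y) \notin zip (a :: s) s) -> x = last a s.
Proof.
elim: s a => [|b s IH] a /=; first by rewrite inE => /eqP.
rewrite in_cons => /orP[/eqP -> /(_ b)|xs xsink]; first by rewrite mem_head.
by apply: IH => // y; apply: contra (xsink y); rewrite in_cons orbC => ->.
Qed.

Lemma zip_behead_rcons a s y :
  zip (rcons (a :: s) y) (rcons s y) = rcons (zip (a :: s) s) (last a s, y).
Proof. by elim: s a => [|b s IH] a //=; rewrite IH. Qed.

End ConsecutivePairs.

Lemma uniq_flatten_mem (T : eqType) (ss : seq (seq T)) s :
  uniq (flatten ss) -> s \in ss -> uniq s.
Proof.
elim: ss => [|t ss IH] //=; rewrite cat_uniq => /and3P[Ut _ Uss].
by rewrite in_cons => /predU1P[->|/(IH Uss)].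
Qed.

Lemma uniq_flatten_block (T : eqType) (ss : seq (seq T)) s t x :
  uniq (flatten ss) -> s \in ss -> t \in ss -> x \in s -> x \in t -> s = t.
Proof.
elim: ss => [|u ss IH] //=; rewrite cat_uniq => /and3P[_ /hasPn uNss Uss].
have notin_u y v : v \in ss -> y \in v -> y \notin u.
  by move=> vss yv; apply: uNss; apply/flattenP; exists v.
rewrite !in_cons => /orP[/eqP ->|sss] /orP[/eqP ->|tss] xs xt //.
- by rewrite (negbTE (notin_u x t tss xt)) in xs.
- by rewrite (negbTE (notin_u x s sss xs)) in xt.
- exact: IH.
Qed.

Lemma card_lt_pairs (I : finType) (A : {set I}) (f : I -> nat) :
  {in A &, injective f} ->
  2 * #|[set p in setX A A | f p.1 < f p.2]| = #|A| * #|A|.-1.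
Proof.
move=> f_inj; set P := [set p in _ | _].
pose swap (p : I * I) := (p.2, p.1).
have swapK : involutive swap by case.
have diagE p : (p \in [set (x, x) | x in A]) = (p.1 == p.2) && (p.1 \in A).
  case: p => a b; apply/imsetP/andP => [[x xA [-> ->]]|[/= /eqP -> bA]].
    by rewrite eqxx.
  by exists b.
have offdiagE : setX A A :\: [set (x, x) | x in A] = P :|: swap @: P.
  apply/setP => -[a b]; rewrite /P (can_imset_pre _ swapK) !inE /= diagE /=.
  case: (boolP (a \in A)) => aA; case: (boolP (b \in A)) => bA; rewrite ?andbT ?andbF //.
  have [->|ab] := eqVneq a b; first by rewrite ltnn.
  by have := contra_neq (f_inj _ _ aA bA) ab; lia.
have disjP : [disjoint P & swap @: P].
  apply/pred0P => -[x y]; rewrite /= /P (can_imset_pre _ swapK) !inE /=.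
  lia.
have card_diag : #|[set (x, x) | x in A]| = #|A|.
  by apply: card_imset => x y [].
have diag_sub : [set (x, x) | x in A] \subset setX A A.
  by apply/subsetP => _ /imsetP[x xA ->]; rewrite inE /= xA.
rewrite mul2n -addnn -[in X in _ + X](card_imset P (inv_inj swapK)) -cardsUI.
rewrite (disjoint_setI0 disjP) cards0 addn0 -offdiagE cardsD cardsX.
by rewrite (setIidPr diag_sub) card_diag -subn1 mulnBr muln1.
Qed.

Section ChainCover.
Variables (n : nat) (C : seq (seq 'I_n)).
Implicit Types (u v w x : 'I_n) (T : 'I_n -> nat).

Lemma chain_edgesP p :
  reflect (exists2 c, c \in C & p \in chain_edges_of c) (p \in chain_edges C).
Proof. by rewrite inE; apply: hasP. Qed.

Lemma sourcesP v :
  reflect (exists2 c, c \in C & (c != [::]) && (v == head v c)) (v \in sources C).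
Proof. by rewrite inE; apply: hasP. Qed.

Lemma Tmax_sink T u :
  (forall w, (u, w) \notin chain_edges C) -> Tmax C T u = gamma C.
Proof.
by move=> usink; rewrite /Tmax; case: pickP => // w; rewrite (negbTE (usink w)).
Qed.

Lemma mem_perfect_edges T u w : ((u, w) \in perfect_edges C T) =
  ((u, w) \in chain_edges C) || (T w <= Tmax C T u).
Proof. by rewrite in_setU [in X in _ || X]inE. Qed.

Hypothesis cover : chain_cover C.

Lemma chain_succ_unique u w1 w2 :
  (u, w1) \in chain_edges C -> (u, w2) \in chain_edges C -> w1 = w2.
Proof.
have [_ [Uflat _]] := cover.
move=> /chain_edgesP[c1 c1C e1] /chain_edgesP[c2 c2C e2].
have [u1 _] := mem_zip_behead e1; have [u2 _] := mem_zip_behead e2.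
move: e2; rewrite -(uniq_flatten_block Uflat c1C c2C u1 u2) => e2.
exact: zip_behead_fun (uniq_flatten_mem Uflat c1C) e1 e2.
Qed.

Lemma chain_pred_unique u1 u2 w :
  (u1, w) \in chain_edges C -> (u2, w) \in chain_edges C -> u1 = u2.
Proof.
have [_ [Uflat _]] := cover.
move=> /chain_edgesP[c1 c1C e1] /chain_edgesP[c2 c2C e2].
have [_ /mem_behead w1] := mem_zip_behead e1.
have [_ /mem_behead w2] := mem_zip_behead e2.
move: e2; rewrite -(uniq_flatten_block Uflat c1C c2C w1 w2) => e2.
exact: zip_behead_inj (uniq_flatten_mem Uflat c1C) e1 e2.
Qed.

Lemma notin_sourcesP w :
  reflect (exists u, (u, w) \in chain_edges C) (w \notin sources C).
Proof.
have [_ [Uflat covered]] := cover.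
apply: (iffP idP) => [wNS|[u /chain_edgesP[c cC uw]]].
  have /flattenP[[|a c] cC] := covered w; first by [].
  rewrite in_cons => /orP[/eqP wa|wc].
    by case/sourcesP: wNS; exists (a :: c); rewrite //= wa.
  have [u uw] := zip_behead_pred (s := a :: c) wc.
  by exists u; apply/chain_edgesP; exists (a :: c).
apply/sourcesP => -[[|a c'] c'C //= /eqP wa].
have [_ wc] := mem_zip_behead uw.
have ec : c = a :: c'.
  by apply: uniq_flatten_block Uflat cC c'C (mem_behead wc) _; rewrite wa mem_head.
have := uniq_flatten_mem Uflat cC; rewrite ec /= => /andP[/negP[]].
by move: wc; rewrite ec /= wa.
Qed.

Lemma pick_chain_succ u w :
  (u, w) \in chain_edges C -> [pick z | (u, z) \in chain_edges C] = Some w.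
Proof.
move=> uw; case: pickP => [z uz|/(_ w)]; last by rewrite uw.
by rewrite (chain_succ_unique uz uw).
Qed.

Lemma Tmax_succ T u w : (u, w) \in chain_edges C -> Tmax C T u = (T w).-1.
Proof. by move=> uw; rewrite /Tmax (pick_chain_succ uw). Qed.

Variable T : 'I_n -> nat.
Hypothesis time : time_function C T.

Lemma time_le1E v : (T v <= 1) = (v \in sources C).
Proof.
have [bounds [Tsrc [_ Tincr]]] := time.
apply/idP/idP => [|/Tsrc -> //]; apply: contraLR => /notin_sourcesP[u uv].
by have := Tincr _ _ uv; have /andP[] := bounds u; lia.
Qed.

Lemma perfect_nonedgeP u w :
  reflect (exists2 x, (u, x) \in chain_edges C & T x < T w)
          ((u, w) \notin perfect_edges C T).
Proof.
have [bounds [Tsrc [Tinj _]]] := time.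
rewrite mem_perfect_edges negb_or -ltnNge; apply: (iffP andP) => [[uNw]|[x ux xw]].
  case: (pickP (fun z => (u, z) \in chain_edges C)) => [x ux|usink]; last first.
    rewrite (Tmax_sink T (fun z => negbT (usink z))).
    by have /andP[] := bounds w; lia.
  rewrite (Tmax_succ T ux) => lt_x_w; exists x => //.
  have xNS : x \notin sources C by apply/notin_sourcesP; exists u.
  have wNS : w \notin sources C.
    by move: xNS; rewrite -!time_le1E -!ltnNge; lia.
  have wx : w != x by apply: contraNneq uNw => ->.
  by have := Tinj _ _ wNS xNS wx; lia.
split; first by apply: contraTN xw => /(chain_succ_unique ux) ->; rewrite ltnn.
by rewrite (Tmax_succ T ux); lia.
Qed.

Lemma card_perfect_nonedges :
  2 * #|~: perfect_edges C T| = #|~: sources C| * #|~: sources C|.-1.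
Proof.
have [_ [_ [Tinj _]]] := time.
rewrite -(card_lt_pairs (f := T)); last first.
  by move=> u v; rewrite !in_setC => uNS vNS /eqP; apply: contraTeq; apply: Tinj.
pose next u := odflt u [pick z | (u, z) \in chain_edges C].
have nextE u x : (u, x) \in chain_edges C -> next u = x.
  by move=> ux; rewrite /next (pick_chain_succ ux).
pose f (p : 'I_n * 'I_n) := (next p.1, p.2).
have f_inj : {in ~: perfect_edges C T &, injective f}.
  move=> [u1 w1] [u2 w2]; rewrite !in_setC.
  move=> /perfect_nonedgeP[x1 ux1 _] /perfect_nonedgeP[x2 ux2 _].
  rewrite /f /= (nextE _ _ ux1) (nextE _ _ ux2) => -[ex ->].
  by rewrite ex in ux1; rewrite (chain_pred_unique ux1 ux2).
rewrite -(card_in_imset f_inj); congr (2 * _); apply: eq_card => -[x w].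
rewrite [in RHS]inE in_setX !in_setC /=; apply/imsetP/idP => [[[u w'] + [-> ->]]|].
  rewrite in_setC => /perfect_nonedgeP[x' ux' lt_x'w'].
  have x'NS : x' \notin sources C by apply/notin_sourcesP; exists u.
  rewrite /f /= (nextE _ _ ux') x'NS lt_x'w' -time_le1E /=.
  by move: x'NS; rewrite -time_le1E; lia.
move=> /andP[/andP[xNS _] lt_xw]; have [u ux] := notin_sourcesP _ xNS.
exists (u, w); last by rewrite /f /= (nextE _ _ ux).
by rewrite in_setC; apply/perfect_nonedgeP; exists x.
Qed.

End ChainCover.

Section ZeroForcing.
Variables (n : nat) (E : {set 'I_n * 'I_n}).
Implicit Types (B : {set 'I_n}) (s : seq 'I_n) (x y w : 'I_n).

Lemma forcesP B x y :
  reflect [/\ x \in B, y \notin B, (x, y) \in E &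
             forall w, (x, w) \in E -> w \notin B -> w = y]
          (forces E B x y).
Proof.
apply: (iffP andP) => [[xB /eqP outE]|[xB yNB xy out]].
  have : y \in out_nbrs E x :\: B by rewrite outE set11.
  rewrite !inE => /andP[yNB xy]; split=> // w xw wNB.
  by apply/set1P; rewrite -outE !inE wNB.
split=> //; apply/eqP/setP => w; rewrite !inE.
by apply/andP/eqP => [[wNB xw]|->]; [apply: out|].
Qed.

Lemma valid_forcing_cat B s1 s2 :
  valid_forcing E B (s1 ++ s2) =
  valid_forcing E B s1 && valid_forcing E (B :|: [set x in s1]) s2.
Proof.
elim: s1 B => [|y s1 IH] B /=; first by rewrite set_nil setU0.
by rewrite IH set_cons setUCA setUA andbA.
Qed.

Lemma valid_forcing_fresh B s :
  valid_forcing E B s -> uniq s /\ {in s, forall x, x \notin B}.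
Proof.
elim: s B => [|y s IH] B //= /andP[/existsP[x /forcesP[_ yNB _ _]] /IH[Us sNB]].
split=> [|z]; last first.
  by rewrite in_cons => /predU1P[-> //|/sNB]; rewrite in_setU1 negb_or => /andP[].
by rewrite Us andbT; apply/negP => /sNB; rewrite setU11.
Qed.

Lemma forcing_closure B : exists2 s, valid_forcing E B s &
  forall x y, ~~ forces E (B :|: [set x in s]) x y.
Proof.
have [k] : exists k, #|~: B| < k by exists #|~: B|.+1.
elim: k B => [|k IH] B //; rewrite ltnS => leBk.
case: (boolP [exists x, exists y, forces E B x y]) => [|noforce]; last first.
  exists [::] => // x y; rewrite set_nil setU0; apply: contra noforce => xy.
  by apply/existsP; exists x; apply/existsP; exists y.
case/existsP=> x /existsP[y xy]; have /forcesP[_ yNB _ _] := xy.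
have [|s vs closed] := IH (y |: B).
  apply: leq_trans leBk; rewrite setCU (cardsD1 y (~: B)) inE yNB.
  by rewrite setIC -setDE.
exists (y :: s); first by rewrite /= vs andbT; apply/existsP; exists x.
by rewrite set_cons setUCA setUA.
Qed.

End ZeroForcing.

Section SandwichedGraph.
Variables (n : nat) (E : {set 'I_n * 'I_n}) (C : seq (seq 'I_n)) (T : 'I_n -> nat).
Hypotheses (cover : chain_cover C) (time : time_function C T).
Hypotheses (chainE : chain_edges C \subset E) (Eperfect : E \subset perfect_edges C T).

Lemma chain_pred_forces t p y : T y = t.+2 -> (p, y) \in chain_edges C ->
  forces E [set v | T v <= t.+1] p y.
Proof.
have [_ [_ [_ Tincr]]] := time.
move=> Ty py; apply/forcesP; split; rewrite ?inE ?Ty ?ltnn ?(subsetP chainE) //.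
  by have := Tincr _ _ py; rewrite Ty.
move=> w /(subsetP Eperfect); rewrite mem_perfect_edges.
case/orP=> [pw _|]; first by rewrite (chain_succ_unique cover py pw).
by rewrite (Tmax_succ cover T py) Ty inE => ->.
Qed.

Lemma sandwiched_zero_forcing : zero_forcing_set E (sources C).
Proof.
have [bounds [_ [Tinj _]]] := time.
have reach t : exists2 s, valid_forcing E (sources C) s &
    sources C :|: [set x in s] = [set v | T v <= t.+1].
  elim: t => [|t [s vs reachE]].
    exists [::]; rewrite // set_nil setU0.
    by apply/setP => v; rewrite [in RHS]inE (time_le1E cover time).
  case: (pickP (fun y => T y == t.+2)) => [y /eqP Ty|none]; last first.
    exists s => //; rewrite reachE; apply/setP => v.
    by rewrite !inE [in RHS]leq_eqVlt none.
  have yNS : y \notin sources C by rewrite -(time_le1E cover time) Ty.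
  have [p py] := notin_sourcesP cover _ yNS.
  exists (rcons s y).
    rewrite -cats1 valid_forcing_cat vs reachE /= andbT.
    by apply/existsP; exists p; apply: chain_pred_forces py.
  apply/setP => v; move/setP/(_ v): reachE; rewrite !inE mem_rcons in_cons orbCA => ->.
  have [->|vy] := eqVneq v y; first by rewrite Ty leqnn.
  rewrite [in RHS]leq_eqVlt ltnS /=; case: eqP => //= Tv.
  have vNS : v \notin sources C by rewrite -(time_le1E cover time) Tv.
  by have := Tinj _ _ vNS yNS vy; rewrite Tv Ty eqxx.
have [s vs reachE] := reach (gamma C).-1.
exists s; split=> //; rewrite reachE; apply/setP => v; rewrite !inE.
by have /andP[_] := bounds v; rewrite /gamma addn1.
Qed.

End SandwichedGraph.

Section ExtendChain.
Variables (n : nat) (C : seq (seq 'I_n)) (a : 'I_n) (c : seq 'I_n) (y : 'I_n).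
Hypothesis cC : a :: c \in C.

Lemma perm_flatten_extend :
  perm_eq (flatten (rcons (a :: c) y :: rem (a :: c) C)) (y :: flatten C).
Proof.
have -> : flatten (rcons (a :: c) y :: rem (a :: c) C) =
  (a :: c) ++ [:: y] ++ flatten (rem (a :: c) C) by rewrite catA cats1.
rewrite (perm_catCA (a :: c) [:: y]) perm_cons perm_sym.
exact: perm_flatten (perm_to_rem cC).
Qed.

Lemma chain_edges_extend :
  chain_edges (rcons (a :: c) y :: rem (a :: c) C) = (last a c, y) |: chain_edges C.
Proof.
apply/setP => p; rewrite in_setU1 !inE /= (perm_has _ (perm_to_rem cC)) /=.
by rewrite /chain_edges_of zip_behead_rcons mem_rcons in_cons orbA.
Qed.

Lemma sources_extend : sources (rcons (a :: c) y :: rem (a :: c) C) = sources C.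
Proof. by apply/setP => v; rewrite !inE /= (perm_has _ (perm_to_rem cC)). Qed.

Lemma size_extend : size (rcons (a :: c) y :: rem (a :: c) C) = size C.
Proof. by rewrite /= size_rem // prednK //; case: (C) cC. Qed.

End ExtendChain.

Section ForcingChains.
Variables (n : nat) (E : {set 'I_n * 'I_n}) (VC : {set 'I_n}) (s : seq 'I_n).
Hypotheses (forcing : valid_forcing E VC s) (spans : VC :|: [set x in s] = setT).

Definition forcing_time v := if v \in VC then 1 else (index v s).+2.

Lemma forcing_time_gt1 v : (1 < forcing_time v) = (v \notin VC).
Proof. by rewrite /forcing_time; case: ifP. Qed.

Lemma mem_forcing v : v \notin VC -> v \in s.
Proof. by move=> vNVC; move/setP/(_ v): spans; rewrite !inE (negbTE vNVC). Qed.

Lemma forcing_time_bounds v : 0 < forcing_time v <= (size s).+1.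
Proof. by rewrite /forcing_time; case: ifPn => // /mem_forcing; rewrite -index_mem. Qed.

Lemma forcing_time_inj : {in ~: VC &, injective forcing_time}.
Proof.
move=> u v; rewrite !inE /forcing_time => uNVC vNVC.
rewrite (negbTE uNVC) (negbTE vNVC) => -[eq_index].
by rewrite -(nth_index u (mem_forcing uNVC)) eq_index nth_index ?mem_forcing.
Qed.

Lemma forcing_prefixE i : i <= size s ->
  VC :|: [set x in take i s] = [set v | forcing_time v <= i.+1].
Proof.
move=> le_i_s; apply/setP => v; rewrite !inE /forcing_time.
by case: ifP => //= _; rewrite in_take_leq.
Qed.

Lemma forcing_time_step i : i < size s -> exists x y,
  forcing_time y = i.+2 /\ forces E [set v | forcing_time v <= i.+1] x y.
Proof.
move=> lt_i_s; have y0 : 'I_n by move: lt_i_s; case: (s) => [//|y0 _ _]; exact: y0.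
have [Us sNVC] := valid_forcing_fresh forcing.
move: forcing; rewrite -(cat_take_drop i s) valid_forcing_cat (drop_nth y0 lt_i_s).
rewrite (forcing_prefixE (ltnW lt_i_s)) => /and3P[_ /existsP[x forces_xy] _].
exists x, (nth y0 s i); split=> //.
by rewrite /forcing_time (negbTE (sNVC _ (mem_nth y0 lt_i_s))) index_uniq.
Qed.

(* Invariant of the forcing chains of the first [i] forces of [s], where each
   force x -> y appends y to the chain ending at x. *)
Definition forcing_chains i C : Prop :=
  [/\ all (fun c => c != [::]) C && uniq (flatten C),
      flatten C =i [set v | forcing_time v <= i.+1],
      sources C = VC,
      size C = #|VC| /\ size (flatten C) = #|VC| + i &
      forall x z, (x, z) \in chain_edges C ->
        [/\ (x, z) \in E, forcing_time x < forcing_time z &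
            forall w, (x, w) \in E -> w != z -> forcing_time w < forcing_time z]].

Lemma forcing_chains0 : forcing_chains 0 [seq [:: v] | v <- enum VC].
Proof.
split; rewrite ?flatten_seq1.
- by rewrite enum_uniq andbT; apply/allP => _ /mapP[v _ ->].
- by move=> v; rewrite mem_enum -forcing_prefixE // take0 set_nil setU0.
- apply/setP => v; apply/sourcesP/idP => [[_ /mapP[u uVC ->] /= /eqP ->]|vVC].
    by rewrite -mem_enum.
  by exists [:: v]; rewrite ?eqxx // (map_f (fun u => [:: u])) ?mem_enum.
- by rewrite size_map -cardE addn0.
- by move=> x z /chain_edgesP[_ /mapP[v _ ->]].
Qed.

Lemma forcing_chainsS i C : i < size s -> forcing_chains i C ->
  exists C', forcing_chains i.+1 C'.
Proof.
move=> lt_i_s [/andP[nonempty Uflat] flatE srcE [sizeC sizeF] chainP].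
have [x [y [Ty /forcesP[xB yNB xy xout]]]] := forcing_time_step lt_i_s.
have /flattenP[[|a c] cC xc] : x \in flatten C by rewrite flatE.
  by [].
have xlast : x = last a c.
  apply: zip_behead_last xc _ => z; apply/negP => xz.
  have /chainP[_ _ /(_ y xy) lt_yz] : (x, z) \in chain_edges C.
    by apply/chain_edgesP; exists (a :: c).
  have [_ /mem_behead zc] := mem_zip_behead xz.
  have : z \in flatten C by apply/flattenP; exists (a :: c).
  rewrite flatE inE => Tz; have yz : y != z by apply: contraNneq yNB => ->; rewrite inE.
  by move: (lt_yz yz); rewrite Ty ltnNge (leqW Tz).
have perm_flat := perm_flatten_extend y cC.
exists (rcons (a :: c) y :: rem (a :: c) C); split.
- rewrite (perm_uniq perm_flat) /= Uflat flatE yNB !andbT.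
  by apply/allP => d /mem_rem; apply: (allP nonempty).
- move=> v; rewrite (perm_mem perm_flat) in_cons flatE !inE [in RHS]leq_eqVlt ltnS.
  have [->|vy] := eqVneq v y; first by rewrite Ty eqxx.
  case: eqP => //= Tv; case/eqP: vy.
  by apply: forcing_time_inj; rewrite ?inE -?forcing_time_gt1 ?Tv ?Ty.
- by rewrite sources_extend.
- split; first by rewrite size_extend.
  by rewrite (perm_size perm_flat) /= sizeF addnS.
- move=> x' z; rewrite chain_edges_extend // -xlast in_setU1.
  case/predU1P=> [[-> ->]|/chainP //]; rewrite inE in xB.
  split=> //; first by rewrite Ty.
  move=> w xw wy; rewrite Ty ltnS.
  have : w \in [set v | forcing_time v <= i.+1].
    by apply: contraNT wy => /(xout w xw) ->; rewrite eqxx.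
  by rewrite inE.
Qed.

Lemma forcing_chains_complete : exists C, forcing_chains (size s) C.
Proof.
suff chains i : i <= size s -> exists C, forcing_chains i C by exact: chains.
elim: i => [_|i IH lt_i_s]; first by eexists; apply: forcing_chains0.
by have [C chainsC] := IH (ltnW lt_i_s); apply: forcing_chainsS chainsC.
Qed.

End ForcingChains.

Lemma zero_forcing_chains n (E : {set 'I_n * 'I_n}) VC :
  zero_forcing_set E VC -> exists C T,
  [/\ chain_cover C, sources C = VC, time_function C T,
      chain_edges C \subset E & E \subset perfect_edges C T].
Proof.
move=> [s [forcing spans]].
have [C [/andP[nonempty Uflat] flatE srcE [sizeC sizeF] chainP]] :=
  forcing_chains_complete forcing spans.
have bounds := forcing_time_bounds spans.
have gammaE : gamma C = (size s).+1 by rewrite /gamma sizeF sizeC addKn addn1.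
have cover : chain_cover C.
  by do 2!split=> //; move=> v; rewrite flatE inE; case/andP: (bounds v).
exists C, (forcing_time VC s); split=> //.
- split; first by rewrite gammaE.
  split; first by move=> v; rewrite srcE /forcing_time => ->.
  split; last by move=> x z /chainP[].
  move=> u v; rewrite srcE => uNVC vNVC; apply: contra_neq.
  by apply: (forcing_time_inj spans); rewrite inE.
- by apply/subsetP => -[x z] /chainP[].
apply/subsetP => -[u w] uw; rewrite mem_perfect_edges.
case: (pickP (fun z => (u, z) \in chain_edges C)) => [z uz|usink].
  have [_ _ /(_ w uw) lt_wz] := chainP _ _ uz; rewrite (Tmax_succ cover _ uz).
  by have [->|/lt_wz lt] := eqVneq w z; [rewrite uz | apply/orP; right; lia].
rewrite Tmax_sink ?gammaE; last by move=> z; rewrite usink.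
by case/andP: (bounds w) => _ ->; rewrite orbT.
Qed.

Section Controllability.
Local Open Scope ring_scope.

Lemma exp_mx_char_poly (K : comNzRingType) n (A : 'M[K]_n.+1) :
  A ^+ n.+1 = - \sum_(i < n.+1) (char_poly A)`_i *: A ^+ i.
Proof.
have lead1 : (char_poly A)`_n.+1 = 1.
  by have := monicP (char_poly_monic A); rewrite lead_coefE size_char_poly.
have := Cayley_Hamilton A; rewrite -[X in horner_mx A X]coefK poly_def.
rewrite rmorph_sum size_char_poly big_ord_recr /= lead1.
under eq_bigr => i _ do rewrite linearZ /= rmorphXn /= horner_mx_X.
rewrite linearZ /= rmorphXn /= horner_mx_X scale1r.
by move/eqP; rewrite addrC addr_eq0 => /eqP.
Qed.

Lemma mul_kalman_eq0 n m (A : 'M[R]_n) (B : 'M[R]_(n, m)) (x : 'rV[R]_n) :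
  x *m kalman A B = 0 <-> forall k : 'I_n, x *m (A ^+ k *m B) = 0.
Proof. by rewrite /kalman mul_mxrow -(@mxrow0 _ _ (fun=> m)); split=> /eq_mxrowP. Qed.

Lemma kalman_lker_mulmx n m (A : 'M[R]_n) (B : 'M[R]_(n, m)) (x : 'rV[R]_n) :
  x *m kalman A B = 0 -> x *m A *m kalman A B = 0.
Proof.
case: n A B x => [|n] A B x; first by rewrite [x *m A]thinmx0 mul0mx.
rewrite !mul_kalman_eq0 => xK k.
rewrite -mulmxA [A *m _]mulmxA -[A *m A ^+ k]/(A * A ^+ k) -exprS.
have [lt_k_n|le_n_k] := ltnP k.+1 n.+1; first exact: (xK (Ordinal lt_k_n)).
have -> : k.+1 = n.+1 by apply/eqP; rewrite eqn_leq le_n_k ltn_ord.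
rewrite exp_mx_char_poly mulNmx mulmxN mulmx_suml mulmx_sumr big1 ?oppr0 // => i _.
by rewrite -scalemxAl -scalemxAr xK scaler0.
Qed.

Lemma row_mul_Bmat n (VC : {set 'I_n}) (y : 'rV[R]_n) k :
  (y *m Bmat VC) 0 k = y 0 (enum_val k).
Proof.
rewrite !mxE (bigD1 (enum_val k)) //= big1 => [|i ik]; rewrite !mxE ?eqxx.
  by rewrite mulr1 addr0.
by rewrite (negbTE ik) mulr0.
Qed.

Lemma forced_entry_eq0 n E (A : 'M[R]_n) B x z (y : 'rV[R]_n) :
  inQ E A -> forces E B x z -> {in B, forall i, y 0 i = 0} ->
  (y *m A) 0 x = 0 -> y 0 z = 0.
Proof.
move=> AQ /forcesP[xB zNB xz zonly] yB.
have zx : z != x by apply: contraNneq zNB => ->.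
rewrite mxE (bigD1 z) //= big1 ?addr0 => [/eqP|i iz].
  by rewrite mulf_eq0 (negbTE (proj2 (AQ _ _ zx) xz)) orbF => /eqP.
have [iB|iNB] := boolP (i \in B); first by rewrite yB ?mul0r.
have ix : i != x by apply: contraNneq iNB => ->.
have [->|/(AQ _ _ ix)/zonly/(_ iNB) iz'] := eqVneq (A i x) 0; first by rewrite mulr0.
by rewrite iz' eqxx in iz.
Qed.

Lemma forcing_preserves_zeros n E (A : 'M[R]_n) (P : 'rV[R]_n -> Prop) B s :
  inQ E A -> (forall y, P y -> P (y *m A)) -> valid_forcing E B s ->
  (forall y, P y -> {in B, forall i, y 0 i = 0}) ->
  forall y, P y -> {in B :|: [set x in s], forall i, y 0 i = 0}.
Proof.
move=> AQ PA; elim: s B => [|z s IH] B /=; first by rewrite set_nil setU0.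
case/andP=> /existsP[x xz] vs PB; rewrite set_cons setUCA setUA.
apply: IH vs _ => y Py i; rewrite in_setU1 => /predU1P[->|]; last exact: PB.
have /forcesP[xB _ _ _] := xz.
exact: forced_entry_eq0 AQ xz (PB _ Py) (PB _ (PA _ Py) _ xB).
Qed.

Lemma zero_forcing_controllable n E (VC : {set 'I_n}) :
  zero_forcing_set E VC -> SSC E VC.
Proof.
move=> [s [forcing spans]] A AQ; apply/eqP/inj_row_free => x xK.
pose P (y : 'rV[R]_n) := y *m kalman A (Bmat VC) = 0.
have PA y : P y -> P (y *m A) by apply: kalman_lker_mulmx.
have PVC y : P y -> {in VC, forall i, y 0 i = 0}.
  move=> /mul_kalman_eq0 Py i iVC.
  have := Py (Ordinal (leq_ltn_trans (leq0n i) (ltn_ord i))).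
  rewrite expr0 mul1mx => /rowP/(_ (enum_rank_in iVC i)).
  by rewrite row_mul_Bmat enum_rankK_in // mxE.
apply/rowP => i; rewrite mxE; apply: (forcing_preserves_zeros AQ PA forcing PVC xK).
by rewrite spans inE.
Qed.

Lemma uncontrollable_lker n m (A : 'M[R]_n) (B : 'M[R]_(n, m)) (x : 'rV[R]_n) :
  x != 0 -> x *m A = 0 -> x *m B = 0 -> ~ controllable A B.
Proof.
move=> x_neq0 xA xB /eqP kalman_free; move/negP: x_neq0; apply.
rewrite -(mulmx_free_eq0 _ kalman_free); apply/eqP/mul_kalman_eq0 => -[[|k] lt_k].
  by rewrite expr0 mul1mx.
by rewrite exprS -[A * _]/(A *m _) -mulmxA mulmxA xA !mul0mx.
Qed.

Definition balanced_weight (I : finType) (S : {set I}) (i : I) : R :=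
  if [pick p in S] == Some i then 1 - #|S|%:R else 1.

Lemma balanced_weight_neq0 (I : finType) (S : {set I}) i :
  #|S| != 1%N -> balanced_weight S i != 0.
Proof.
rewrite /balanced_weight => S_neq1; case: ifP => _; last exact: oner_neq0.
by rewrite subr_eq0 eq_sym pnatr_eq1.
Qed.

Lemma sum_balanced_weight (I : finType) (S : {set I}) :
  \sum_(i in S) balanced_weight S i = 0.
Proof.
rewrite /balanced_weight; case: pickP => [p pS|noS]; last by rewrite big_pred0.
rewrite (bigD1 p) //= eqxx (eq_bigr (fun=> 1)) => [|i /andP[_ ip]]; last first.
  by rewrite (inj_eq Some_inj) eq_sym (negbTE ip).
rewrite sumr_const (cardsD1 p S) pS natrD mulr1n opprD addrA subrr sub0r.
by rewrite (eq_card (B := S :\ p)) ?addNr // => i; rewrite !inE andbC.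
Qed.

Lemma closed_uncontrollable n E (VC D : {set 'I_n}) :
  VC \subset D -> D != setT -> (forall x y, ~~ forces E D x y) -> ~ SSC E VC.
Proof.
move=> VCD D_neqT closed ssc.
have /subsetPn[w0 _ w0ND] : ~~ (setT \subset D) by rewrite subTset.
pose out j := out_nbrs E j :\: D.
have out_card j : j \in D -> #|out j| != 1%N.
  move=> jD; apply/negP => /cards1P[y outy].
  by have := closed j y; rewrite /forces jD -/(out j) outy eqxx.
pose wt j i := if j \in D then balanced_weight (out j) i else 1.
have wt_neq0 j i : wt j i != 0.
  by rewrite /wt; case: ifP => [/out_card/balanced_weight_neq0 //|_]; apply: oner_neq0.
(* The weights of column j in D sum to zero over the rows outside D, which is
   possible because j does not force, and outside D the diagonal absorbs the
   column sum: the indicator of ~: D is then a left null vector of A and B. *)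
pose A' := \matrix_(i, j) if (j, i) \in E then wt j i else 0.
pose A := \matrix_(i, j)
  if i == j then - \sum_(l | (l \notin D) && (l != j)) A' l j else A' i j.
pose x := \row_i (if i \in D then 0 else 1 : R).
apply: (@uncontrollable_lker _ _ A _ x) (ssc A _).
- by apply/negP => /eqP/rowP/(_ w0); rewrite !mxE (negbTE w0ND) => /eqP; rewrite oner_eq0.
- apply/rowP => j; rewrite !mxE.
  transitivity (\sum_(i | i \notin D) A i j).
    rewrite [RHS]big_mkcond; apply: eq_bigr => i _; rewrite !mxE.
    by case: (i \in D); rewrite ?mul0r ?mul1r.
  have [jD|jND] := boolP (j \in D); last first.
    rewrite (bigD1 j) //= mxE eqxx.
    by under eq_bigr => i /andP[_ ij] do rewrite mxE (negbTE ij); rewrite addNr.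
  rewrite -[RHS](sum_balanced_weight (out j)) big_mkcond [RHS]big_mkcond.
  apply: eq_bigr => i _; rewrite !mxE /wt jD !inE.
  by case: (boolP (i \in D)) => [|iND]; [|rewrite ifN //; apply: contraNneq iND => ->].
- by apply/rowP => k; rewrite row_mul_Bmat !mxE (subsetP VCD _ (enum_valP k)).
move=> i j ij; rewrite !mxE (negbTE ij).
by case: ((j, i) \in E); split=> //; rewrite ?eqxx // => _; apply: wt_neq0.
Qed.

Lemma controllable_zero_forcing n E (VC : {set 'I_n}) :
  SSC E VC -> zero_forcing_set E VC.
Proof.
move=> ssc; have [s forcing closed] := forcing_closure E VC.
have [spans|partial] := eqVneq (VC :|: [set x in s]) setT; first by exists s.
by case: (closed_uncontrollable (subsetUl _ _) partial closed ssc).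
Qed.

Lemma SSC_zero_forcing n E (VC : {set 'I_n}) :
  SSC E VC <-> zero_forcing_set E VC.
Proof.
by split; [apply: controllable_zero_forcing | apply: zero_forcing_controllable].
Qed.

End Controllability.

Theorem theorem5 (n : nat) (E : {set 'I_n * 'I_n}) (VC : {set 'I_n}) :
  zero_forcing_set E VC ->
  ((forall u v : 'I_n, (u, v) \notin E -> ~ SSC (E :|: [set (u, v)]) VC)
   <->
   (exists C : seq (seq 'I_n), chain_cover C /\ sources C = VC /\
      exists T : 'I_n -> nat, time_function C T /\ E = perfect_edges C T)).
Proof.
move=> zfs; split=> [maximal|[C [cover [srcE [T [time ->]]]]] u v uv].
  have [C [T [cover srcE time chainE Eperfect]]] := zero_forcing_chains zfs.
  exists C; split=> //; split=> //; exists T; split=> //.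
  apply/eqP; rewrite eqEsubset Eperfect /=; apply/subsetP => -[u v] uvP.
  apply: contraT => uvNE; case: (maximal u v uvNE); apply/SSC_zero_forcing.
  rewrite -srcE; apply: sandwiched_zero_forcing cover time _ _.
    exact: subset_trans chainE (subsetUl _ _).
  by rewrite subUset Eperfect sub1set.
move/SSC_zero_forcing/zero_forcing_chains => [C' [T' [cover' srcE' time' _ Eperfect']]].
have : #|~: perfect_edges C' T'| < #|~: perfect_edges C T|.
  apply: proper_card; rewrite properC; apply: proper_sub_trans Eperfect'.
  by apply: properUl; rewrite sub1set.
rewrite -(ltn_pmul2l (isT : 0 < 2)) !card_perfect_nonedges //.
by rewrite srcE srcE' ltnn.
Qed.
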